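(* A geodesic metric space is $(L,C)$-quasi-isometric to $\mathbb{R}$ for some $L\geqslant 1$, $C\geqslant 0$ if and only if it is $(1,C')$-quasi-isometric to $\mathbb{R}$ for some $C'\geqslant 0$.
   Context: A map $f:(X,d_X)\to(Y,d_Y)$ is an $(L,C)$-quasi-isometry if $\frac1L d_X(a,b)-C\leqslant d_Y(f(a),f(b))\leqslant Ld_X(a,b)+C$ for all $a,b\in X$ and every point of $Y$ is within distance $C$ of $f(X)$. $\mathbb{R}$ carries its standard metric. *)

From Stdlib Require Import Reals.
Open Scope R_scope.

Definition is_metric {X : Type} (d : X -> X -> R) : Prop :=
  (forall a b, 0 <= d a b) /\
  (forall a b, d a b = 0 <-> a = b) /\
  (forall a b, d a b = d b a) /\
  (forall a b c, d a c <= d a b + d b c).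

Definition is_geodesic {X : Type} (d : X -> X -> R) : Prop :=
  forall a b : X, exists gamma : R -> X,
    gamma 0 = a /\ gamma (d a b) = b /\
    (forall s t, 0 <= s <= d a b -> 0 <= t <= d a b ->
       d (gamma s) (gamma t) = Rabs (s - t)).

Definition quasi_isometry {X Y : Type} (dX : X -> X -> R) (dY : Y -> Y -> R)
  (L C : R) (f : X -> Y) : Prop :=
  (forall a b : X, dX a b / L - C <= dY (f a) (f b) /\
                   dY (f a) (f b) <= L * dX a b + C) /\
  (forall y : Y, exists x : X, dY y (f x) <= C).

Definition dR (x y : R) : R := Rabs (x - y).

(* Fix a basepoint o and replace an (L,C)-quasi-isometry g : X -> R by the
   signed distance f x = ± d o x, the sign recording on which side of g o the
   value g x lies.  The key estimate: if g x lies between g a and g b, then g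
   runs coarsely continuously along a geodesic from a to b, so some point of
   that geodesic has image near g x and is therefore within K = L (L + 2C) of
   x; hence d a x + d x b <= d a b + 2K.  This controls |f a - f b| up to the
   additive error 2K, so f is a (1, 2K)-quasi-isometry. *)

From Stdlib Require Import Reals Lra.
Open Scope R_scope.

Ltac solve_abs := unfold dR, Rabs in *; repeat destruct Rcase_abs; lra.

Lemma coarse_intermediate_value (h : R -> R) (D M v : R) :
  0 <= D ->
  (forall s t, 0 <= s <= D -> 0 <= t <= D -> Rabs (s - t) <= 1 ->
     Rabs (h s - h t) <= M) ->
  h 0 <= v <= h D -> exists t, 0 <= t <= D /\ Rabs (h t - v) <= M.
Proof.
  intros HD Hstep Hv.
  assert (Hbetween : forall s t, 0 <= s <= D -> 0 <= t <= D ->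
            Rabs (s - t) <= 1 -> h s <= v <= h t -> Rabs (h s - v) <= M).
  { intros s t Hs Ht Hst Hvst. specialize (Hstep s t Hs Ht Hst). solve_abs. }
  assert (Hind : forall (n : nat) E, 0 <= E <= D -> E <= INR n -> v <= h E ->
            exists t, 0 <= t <= E /\ Rabs (h t - v) <= M).
  { induction n as [|n IH]; intros E HE HEn HvE;
      (destruct (Rle_dec E 1) as [HE1|HE1];
       [exists 0; split; [lra|]; apply (Hbetween 0 E); solve_abs|]).
    - simpl in HEn; lra.
    - rewrite S_INR in HEn.
      destruct (Rle_dec v (h (E - 1))) as [Hv1|Hv1].
      + destruct (IH (E - 1)) as [t [Ht Hnear]]; try lra.
        exists t; split; [lra | exact Hnear].
      + exists (E - 1); split; [lra|].
        apply (Hbetween (E - 1) E); solve_abs. }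
  destruct (INR_archimed 1 D) as [n Hn]; [lra|].
  apply (Hind n); lra.
Qed.

Lemma dR_opp (x y : R) : dR (- x) (- y) = dR x y.
Proof. unfold dR. rewrite <- Rabs_Ropp. f_equal. ring. Qed.

Lemma quasi_isometry_opp {X : Type} {dX : X -> X -> R} {L C : R} {g : X -> R} :
  quasi_isometry dX dR L C g -> quasi_isometry dX dR L C (fun x => - g x).
Proof.
  intros [Hdist Hsurj]. split.
  - intros a b. rewrite dR_opp. apply Hdist.
  - intros y. destruct (Hsurj (- y)) as [x Hx].
    exists x. rewrite <- (Ropp_involutive y) at 1. rewrite dR_opp. exact Hx.
Qed.

Section GeodesicSpace.

Variables (X : Type) (d : X -> X -> R).
Hypothesis d_metric : is_metric d.
Hypothesis d_geodesic : is_geodesic d.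

Lemma dist_ge0 (a b : X) : 0 <= d a b.
Proof. apply d_metric. Qed.

Lemma dist_xx (a : X) : d a a = 0.
Proof. apply d_metric. reflexivity. Qed.

Lemma dist_sym (a b : X) : d a b = d b a.
Proof. apply d_metric. Qed.

Lemma dist_triangle (a b c : X) : d a c <= d a b + d b c.
Proof. apply d_metric. Qed.

Lemma geodesic_segment_split {a b : X} {gamma : R -> X} :
  gamma 0 = a -> gamma (d a b) = b ->
  (forall s t, 0 <= s <= d a b -> 0 <= t <= d a b ->
     d (gamma s) (gamma t) = Rabs (s - t)) ->
  forall t, 0 <= t <= d a b -> d a (gamma t) = t /\ d (gamma t) b = d a b - t.
Proof.
  intros Hstart Hend Hiso t Ht.
  pose proof (dist_ge0 a b).
  rewrite <- Hstart at 1. rewrite <- Hend at 1.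
  rewrite !Hiso by lra. split; solve_abs.
Qed.

Lemma geodesic_point (a b : X) (t : R) :
  0 <= t <= d a b -> exists z, d a z = t /\ d z b = d a b - t.
Proof.
  intros Ht. destruct (d_geodesic a b) as [gamma [Hstart [Hend Hiso]]].
  exists (gamma t). exact (geodesic_segment_split Hstart Hend Hiso t Ht).
Qed.

Section QuasiIsometryToLine.

Variables (g : X -> R) (L C : R).
Hypothesis L_ge1 : 1 <= L.
Hypothesis C_ge0 : 0 <= C.
Hypothesis g_qi : quasi_isometry d dR L C g.

Let K := L * (L + 2 * C).

Lemma qi_dist_le (a b : X) (r : R) : dR (g a) (g b) <= r -> d a b <= L * (r + C).
Proof.
  intros Hr. destruct (proj1 g_qi a b) as [Hlower _].
  replace (d a b) with (L * (d a b / L)) by (field; lra).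
  apply Rmult_le_compat_l; lra.
Qed.

Lemma detour_le_of_between_le (a b x : X) :
  g a <= g x <= g b -> d a x + d x b <= d a b + 2 * K.
Proof.
  intros Hx. destruct (d_geodesic a b) as [gamma [Hstart [Hend Hiso]]].
  assert (Hstep : forall s t, 0 <= s <= d a b -> 0 <= t <= d a b ->
            Rabs (s - t) <= 1 -> Rabs (g (gamma s) - g (gamma t)) <= L + C).
  { intros s t Hs Ht Hst. destruct (proj1 g_qi (gamma s) (gamma t)) as [_ Hupper].
    unfold dR in Hupper. rewrite Hiso in Hupper by assumption.
    assert (L * Rabs (s - t) <= L * 1) by (apply Rmult_le_compat_l; lra).
    lra. }
  destruct (coarse_intermediate_value (fun t => g (gamma t)) (d a b) (L + C) (g x))
    as [t [Ht Hnear]].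
  - apply dist_ge0.
  - exact Hstep.
  - rewrite Hstart, Hend. exact Hx.
  - assert (Hclose : d (gamma t) x <= K).
    { replace K with (L * ((L + C) + C)) by (unfold K; ring).
      exact (qi_dist_le (gamma t) x (L + C) Hnear). }
    destruct (geodesic_segment_split Hstart Hend Hiso t Ht) as [Hat Htb].
    pose proof (dist_triangle a (gamma t) x).
    pose proof (dist_triangle x (gamma t) b).
    pose proof (dist_sym x (gamma t)).
    lra.
Qed.

Lemma detour_le_of_between (a b x : X) :
  g a <= g x <= g b \/ g b <= g x <= g a -> d a x + d x b <= d a b + 2 * K.
Proof.
  intros [Hx|Hx]; [exact (detour_le_of_between_le a b x Hx)|].
  rewrite (dist_sym a x), (dist_sym x b), (dist_sym a b), Rplus_comm.
  exact (detour_le_of_between_le b a x Hx).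
Qed.

(* Take y with g y far above g o, so that d o y >= r, and z at distance r
   from o on a geodesic to y.  If g z <= g o, then g o lies between g z and
   g y, and the detour estimate forces r <= K. *)
Lemma above_at_dist_or_le (o : X) (r : R) :
  0 <= r -> (exists z, d o z = r /\ g o < g z) \/ r <= K.
Proof.
  intros Hr. destruct (proj2 g_qi (g o + L * r + 2 * C)) as [y Hy].
  assert (HLr : 0 <= L * r) by (apply Rmult_le_pos; lra).
  assert (Hgy : g o + L * r + C <= g y) by solve_abs.
  assert (Hry : r <= d o y).
  { destruct (proj1 g_qi o y) as [_ Hupper].
    apply (Rmult_le_reg_l L); [lra|]. solve_abs. }
  destruct (geodesic_point o y r) as [z [Hoz Hzy]]; [lra|].
  destruct (Rlt_dec (g o) (g z)) as [Hz|Hz]; [left; exists z; auto|right].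
  pose proof (detour_le_of_between_le z y o ltac:(lra)).
  rewrite dist_sym in Hoz. lra.
Qed.

End QuasiIsometryToLine.

Definition signed_dist (g : X -> R) (o x : X) : R :=
  if Rle_dec (g o) (g x) then d o x else - d o x.

Section SignedDistance.

Variables (g : X -> R) (L C : R) (o : X).
Hypothesis L_ge1 : 1 <= L.
Hypothesis C_ge0 : 0 <= C.
Hypothesis g_qi : quasi_isometry d dR L C g.

Let K := L * (L + 2 * C).
Let f := signed_dist g o.

Lemma dR_signed_dist (a b : X) : d a b - 2 * K <= dR (f a) (f b) <= d a b + 2 * K.
Proof.
  pose proof (detour_le_of_between g L C L_ge1 g_qi) as Hdetour.
  pose proof (dist_triangle o a b). pose proof (dist_triangle o b a).
  pose proof (dist_triangle a o b).
  pose proof (dist_sym a b). pose proof (dist_sym a o). pose proof (dist_sym b o).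
  unfold f, signed_dist, K in *.
  destruct (Rle_dec (g o) (g a)), (Rle_dec (g o) (g b)).
  - destruct (Rle_dec (g a) (g b)).
    + pose proof (Hdetour o b a ltac:(lra)). split; solve_abs.
    + pose proof (Hdetour o a b ltac:(lra)). split; solve_abs.
  - pose proof (Hdetour a b o ltac:(lra)). split; solve_abs.
  - pose proof (Hdetour a b o ltac:(lra)). split; solve_abs.
  - destruct (Rle_dec (g a) (g b)).
    + pose proof (Hdetour o a b ltac:(lra)). split; solve_abs.
    + pose proof (Hdetour o b a ltac:(lra)). split; solve_abs.
Qed.

Lemma signed_dist_coarse_surj (r : R) : exists x, dR r (f x) <= 2 * K.
Proof.
  assert (Hfo : f o = 0).
  { unfold f, signed_dist. destruct Rle_dec; [apply dist_xx | lra]. }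
  assert (HK : 0 <= K) by (apply Rmult_le_pos; lra).
  unfold K in *.
  destruct (Rle_dec 0 r) as [Hr|Hr].
  - destruct (above_at_dist_or_le g L C L_ge1 C_ge0 g_qi o r Hr) as [[z [Hoz Hz]]|Hsmall].
    + exists z. unfold f, signed_dist. destruct Rle_dec; solve_abs.
    + exists o. rewrite Hfo. solve_abs.
  - (* For -g the strict inequality yields g z < g o, matching the
       tie-breaking in signed_dist. *)
    assert (Hr' : 0 <= - r) by lra.
    destruct (above_at_dist_or_le (fun x => - g x) L C L_ge1 C_ge0
                (quasi_isometry_opp g_qi) o (- r) Hr')
      as [[z [Hoz Hz]]|Hsmall].
    + exists z. unfold f, signed_dist. destruct Rle_dec; solve_abs.
    + exists o. rewrite Hfo. solve_abs.
Qed.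

Lemma signed_dist_quasi_isometry : quasi_isometry d dR 1 (2 * K) f.
Proof.
  split; [|exact signed_dist_coarse_surj].
  intros a b. rewrite Rdiv_1_r, Rmult_1_l. apply dR_signed_dist.
Qed.

End SignedDistance.

End GeodesicSpace.

Theorem corollary4p12 (X : Type) (d : X -> X -> R)
  (Hmetric : is_metric d) (Hgeod : is_geodesic d) :
  (exists (L C : R) (f : X -> R), 1 <= L /\ 0 <= C /\ quasi_isometry d dR L C f)
  <->
  (exists (C' : R) (f : X -> R), 0 <= C' /\ quasi_isometry d dR 1 C' f).
Proof.
  split.
  - intros [L [C [g [HL [HC Hg]]]]].
    destruct (proj2 Hg 0) as [o _].
    exists (2 * (L * (L + 2 * C))), (signed_dist _ d g o). split.
    + assert (0 <= L * (L + 2 * C)) by (apply Rmult_le_pos; lra). lra.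
    + apply signed_dist_quasi_isometry; assumption.
  - intros [C' [f [HC' Hf]]]. exists 1, C', f. split; [lra | auto].
Qed.
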